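(* For every odd $N\ge3$ we have ${}'\mathcal X^+_{N-2}={}^\sharp\mathcal X^+_{N-2}$.
   Context: For an odd integer $M\ge3$ the following objects are defined (we write $[i,j]=\{h\in\mathbb Z:i\le h\le j\}$, empty if $i>j$). A $2$-element subset $\{i,j\}\subseteq[1,M]$ is written $ij$ when either ($i<j$ and $j-i$ odd) or ($i>j$ and $i-j$ even); each $2$-element subset has exactly one such writing. Let $\mathcal P_M$ be the set of all finite sets $B$ of pairwise disjoint $2$-element subsets of $[1,M]$; for $B\in\mathcal P_M$ let $\mathrm{supp}(B)=\bigcup_{X\in B}X$, $B^0=\{\{i,j\}\in B: i-j\text{ even}\}$, $B^1=\{\{i,j\}\in B: i-j\text{ odd}\}$. A set $X\subseteq[1,M]$ is $0$-covered (resp. $1$-covered) by $B^1$ if there are $a_1b_1,\dots,a_sb_s\in B^1$ ($s\ge0$, so $a_r<b_r$) with $X=[a_1,b_1]\sqcup\dots\sqcup[a_s,b_s]$ (resp. $X=[a_1,b_1]\sqcup\dots\sqcup[a_s,b_s]\sqcup\{u\}$), disjoint unions. Let ${}^*\mathcal P_M$ be the set of $B\in\mathcal P_M$ such that: for every $ij\in B^1$, $[i+1,j-1]$ is $0$-covered by $B^1$; and there is a sequence $(i_1,\dots,i_{2s})$ in $[1,M]$ with $B^0=\{i_{2s}i_1,i_{2s-1}i_2,\dots,i_{s+1}i_s\}$ ($s=|B^0|$; unique) such that, if $s\ge1$, each of $[i_1+1,i_2-1],\dots,[i_{s-1}+1,i_s-1],[i_{s+1}+1,i_{s+2}-1],\dots,[i_{2s-1}+1,i_{2s}-1]$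 is $0$-covered by $B^1$. Let $\mathcal X^+_{M-2}$ be the set of $B\in{}^*\mathcal P_M$ such that $M\notin\mathrm{supp}(B)$ and either $s=0$, or $s$ is odd and either (i) $[1,i_1-1]$ is $1$-covered and $[i_{2s}+1,M-1]$ is $0$-covered by $B^1$, or (ii) $[1,i_1-1]$ is $0$-covered and $[i_{2s}+1,M-1]$ is $1$-covered by $B^1$. For $B\in\mathcal X^+_{M-2}$ with $s\ge1$ there is a unique $u_B$: in case (i), $u_B\in[1,i_1-1]$ with $[1,u_B-1]$, $[u_B+1,i_1-1]$ $0$-covered by $B^1$ ($u_B$ odd); in case (ii), $u_B\in[i_{2s}+1,M-1]$ with $[i_{2s}+1,u_B-1]$, $[u_B+1,M-1]$ $0$-covered by $B^1$ ($u_B$ even). Let ${}'\mathcal X^+_{M-2}$ be the set of $B\in\mathcal X^+_{M-2}$ such that either ($|B^0|=0$ and $M-1\notin\mathrm{supp}(B)$) or ($|B^0|\ge1$ and $u_B$ even). For odd $M\ge5$ and $k\in[1,M-1]$ let $\iota_k:[1,M-2]\to[1,M]$ be $\iota_k(i)=i$ for $i<k$ and $\iota_k(i)=i+2$ for $i\ge k$, and let $I_k:\mathcal P_{M-2}\to\mathcal P_M$ send $B$ to $\{\{\iota_k(a),\iota_k(b)\}:\{a,b\}\in B\}\cup\{\{k,k+1\}\}$. Let ${}'Pr^+_{M-2}\subseteq\mathcal P_M$ consist of $\emptyset$ and of the sets $\{\{M-2,1\},\{M-3,2\},\dots,\{M-\tau,\tau-1\}\}$ for even $\tau\in[2,(M-1)/2]$.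 Define ${}^\sharp\mathcal X^+_{M-2}\subseteq\mathcal P_M$ recursively: ${}^\sharp\mathcal X^+_1=\{\emptyset\}\subseteq\mathcal P_3$; for $M\ge5$, $B\in\mathcal P_M$ lies in ${}^\sharp\mathcal X^+_{M-2}$ iff either $B\in{}'Pr^+_{M-2}$, or $|B^0|>0$ and $B=I_k(B')$ for some $B'\in{}^\sharp\mathcal X^+_{M-4}$ and $k\in[1,M-2]$, or $|B^0|=0$ and $B=I_k(B')$ for some $B'\in{}^\sharp\mathcal X^+_{M-4}$ and $k\in[1,M-3]$. *)

From HB Require Import structures.
From mathcomp Require Import all_boot finmap.

Set Implicit Arguments.
Unset Strict Implicit.
Unset Printing Implicit Defensive.

Local Open Scope fset_scope.

Notation pairset := {fset {fset nat}} (only parsing).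

Definition in_P (M : nat) (B : {fset {fset nat}}) : Prop :=
  (forall X, X \in B -> #|` X| = 2 /\ (forall h, h \in X -> 1 <= h <= M)) /\
  (forall X Y, X \in B -> Y \in B -> X != Y -> X `&` Y = fset0).

Definition in_supp (B : {fset {fset nat}}) (h : nat) : Prop :=
  exists2 X, X \in B & h \in X.

Definition inB1 (B : {fset {fset nat}}) (i j : nat) : Prop :=
  [/\ i < j, odd (j - i) & [fset i; j] \in B].

Definition inB0 (B : {fset {fset nat}}) (i j : nat) : Prop :=
  [/\ j < i, ~~ odd (i - j) & [fset i; j] \in B].

Definition B0_nonempty (B : {fset {fset nat}}) : Prop :=
  exists i j, inB0 B i j.

Definition B1_intervals (B : {fset {fset nat}}) (s : seq (nat * nat)) : Prop :=
  (forall p, p \in s -> inB1 B p.1 p.2) /\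
  pairwise (fun p q : nat * nat => (p.2 < q.1) || (q.2 < p.1)) s.

Definition covered0 (B : {fset {fset nat}}) (i j : nat) : Prop :=
  exists s : seq (nat * nat), B1_intervals B s /\
    (forall h, (i <= h <= j) <-> exists2 p, p \in s & p.1 <= h <= p.2).

Definition covered1 (B : {fset {fset nat}}) (i j : nat) : Prop :=
  exists u, exists s : seq (nat * nat), B1_intervals B s /\
    (forall p, p \in s -> ~~ (p.1 <= u <= p.2)) /\
    (forall h, (i <= h <= j) <-> (h = u \/ exists2 p, p \in s & p.1 <= h <= p.2)).

(* The sequence (i_1,...,i_{2s}) = (f 1, ..., f (2s)) describing B^0 as in the
   definition of *P_M: B^0 = {i_{2s}i_1, ..., i_{s+1}i_s}, the sequence being
   strictly increasing (this is what makes it unique), with the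
   gaps [i_r+1, i_{r+1}-1] (r ≠ s) 0-covered by B^1. *)
Definition star_seq (B : {fset {fset nat}}) (s : nat) (f : nat -> nat) : Prop :=
  [/\ (forall r, 1 <= r <= s -> inB0 B (f (s.*2.+1 - r)) (f r)),
      (forall i j, inB0 B i j ->
         exists r, [/\ 1 <= r <= s, i = f (s.*2.+1 - r) & j = f r]),
      (forall r, 1 <= r < s.*2 -> f r < f r.+1),
      (forall r, 1 <= r < s -> covered0 B (f r).+1 (f r.+1).-1) &
      (forall r, s.+1 <= r < s.*2 -> covered0 B (f r).+1 (f r.+1).-1)].

Definition in_starP (M : nat) (B : {fset {fset nat}}) : Prop :=
  [/\ in_P M B,
      (forall i j, inB1 B i j -> covered0 B i.+1 j.-1) &
      exists s f, star_seq B s f].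

Definition in_Xplus (M : nat) (B : {fset {fset nat}}) : Prop :=
  [/\ in_starP M B, ~ in_supp B M &
      exists s f, star_seq B s f /\
        (s = 0 \/
         (odd s /\
          ((covered1 B 1 (f 1).-1 /\ covered0 B (f s.*2).+1 M.-1) \/
           (covered0 B 1 (f 1).-1 /\ covered1 B (f s.*2).+1 M.-1))))].

Definition is_uB (M : nat) (B : {fset {fset nat}}) (s : nat) (f : nat -> nat)
    (u : nat) : Prop :=
  [/\ covered0 B (f s.*2).+1 M.-1, 1 <= u <= (f 1).-1,
      covered0 B 1 u.-1 & covered0 B u.+1 (f 1).-1]
  \/
  [/\ covered0 B 1 (f 1).-1, (f s.*2).+1 <= u <= M.-1,
      covered0 B (f s.*2).+1 u.-1 & covered0 B u.+1 M.-1].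

Definition in_Xplus' (M : nat) (B : {fset {fset nat}}) : Prop :=
  in_Xplus M B /\
  ((~ B0_nonempty B /\ ~ in_supp B M.-1) \/
   (B0_nonempty B /\
    exists s f u, [/\ star_seq B s f, 1 <= s, is_uB M B s f u & ~~ odd u])).

Definition iota_k (k i : nat) : nat := if i < k then i else i.+2.

Definition I_k (k : nat) (B : {fset {fset nat}}) : {fset {fset nat}} :=
  [fset [fset iota_k k h | h in X] | X : {fset nat} in B] `|` [fset [fset k; k.+1]].

Definition in_Pr (M : nat) (B : {fset {fset nat}}) : Prop :=
  B = fset0 \/
  exists tau, [/\ ~~ odd tau, 2 <= tau <= (M.-1)./2 &
     B = [fset [fset M - r.+1; r] | r : nat in iota 1 tau.-1]].

(* sharp_aux k B  <->  B ∈ #X^+_{M-2} with M = 2k+3 *)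
Fixpoint sharp_aux (k : nat) (B : {fset {fset nat}}) : Prop :=
  match k with
  | 0 => B = fset0
  | k'.+1 =>
      let M := k.*2.+3 in
      in_P M B /\
      (in_Pr M B \/
       exists B' j, [/\ sharp_aux k' B', B = I_k j B' &
          ((B0_nonempty B /\ 1 <= j <= M - 2) \/
           (~ B0_nonempty B /\ 1 <= j <= M - 3))])
  end.

Definition in_sharpXplus (M : nat) (B : {fset {fset nat}}) : Prop :=
  sharp_aux (M - 3)./2 B.

(* Inserting the adjacent pair {k, k+1} (the map I_k) changes no covering
   condition: the new pair is just one more tile of a 0-covering, and since no
   other pair has an endpoint in {k, k+1}, a covering of I_k B never starts or
   ends inside it and can be pulled back to B.  Hence B lies in 'X^+_{M-2}
   exactly when I_k B lies in 'X^+_M, for every admissible k.  Conversely, in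
   an element of 'X^+ with a B^1 pair, the innermost pair of a nest of B^1
   pairs is adjacent, so the element is I_j of a smaller one; and in an element
   without B^1 pairs every gap is empty, which forces the B^0 endpoints to be
   1, ..., s, M-s-1, ..., M-2 and the set to be one of 'Pr^+.  Induction on M
   then reproduces the recursive definition of #X^+. *)

From HB Require Import structures.
From mathcomp Require Import all_boot finmap zify.
From Stdlib Require Import Classical.

Set Implicit Arguments.
Unset Strict Implicit.
Unset Printing Implicit Defensive.

Local Open Scope fset_scope.

Definition iota_inv (k h : nat) : nat := if h < k then h else h - 2.

Section IotaArith.
Variable k : nat.
Local Notation io := (iota_k k).

Lemma iota_kK : cancel io (iota_inv k).
Proof. by move=> h; rewrite /iota_inv /iota_k; case: (ltnP h k) => ?; case: ifP; lia. Qed.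

Lemma iota_invK h : h != k -> h != k.+1 -> io (iota_inv k h) = h.
Proof. by rewrite /iota_inv /iota_k => ? ?; case: (ltnP h k) => ?; case: ifP; lia. Qed.

Lemma iota_k_inj : injective io.
Proof. exact: can_inj iota_kK. Qed.

Lemma ltn_iota a b : (io a < io b) = (a < b).
Proof. by rewrite /iota_k; case: (ltnP a k) => ?; case: (ltnP b k) => ?; apply/idP/idP; lia. Qed.

Lemma leq_iota a b : (io a <= io b) = (a <= b).
Proof. by rewrite leqNgt ltn_iota -leqNgt. Qed.

Lemma iota_k_neq h : io h != k /\ io h != k.+1.
Proof. by rewrite /iota_k; case: (ltnP h k) => ?; split; apply/eqP; lia. Qed.

Lemma odd_iota_k h : odd (io h) = odd h.
Proof. by rewrite /iota_k; case: ifP => //= _; rewrite negbK. Qed.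

Lemma odd_sub_iota a b : odd (io b - io a) = odd (b - a).
Proof.
rewrite /iota_k; case: (ltnP a k) => ?; case: (ltnP b k) => ? //.
- by rewrite !subSn ?negbK //; lia.
- have -> : b - a.+2 = 0 by lia.
  by have -> : b - a = 0 by lia.
Qed.

Lemma iota_k_small h : h < k -> io h = h.
Proof. by rewrite /iota_k => ->. Qed.

Lemma iota_k_big h : k <= h -> io h = h.+2.
Proof. by rewrite /iota_k ltnNge => ->. Qed.

Lemma iota_kS h : h.+1 != k -> io h.+1 = (io h).+1.
Proof. by rewrite /iota_k => ?; case: (ltnP h k) => ?; case: ifP; lia. Qed.

Lemma iota_k_bounds h : h <= io h <= h.+2.
Proof. by rewrite /iota_k; case: ifP; lia. Qed.

Lemma iota_k_pred h : h != k -> io h.-1 = (io h).-1.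
Proof. by rewrite /iota_k => ?; case: (ltnP h k) => ?; case: ifP; lia. Qed.

Lemma iota_inv_pred h : iota_inv k (io h).-1 = h.-1.
Proof. by rewrite /iota_k /iota_inv; case: (ltnP h k) => ?; case: ifP; lia. Qed.

Hypothesis k_gt0 : 0 < k.

Lemma iota_k0 : io 0 = 0.
Proof. exact: iota_k_small. Qed.

Lemma iota_k_gt0 h : (0 < io h) = (0 < h).
Proof. by rewrite /iota_k; case: ifP => ?; apply/idP/idP; lia. Qed.

End IotaArith.

Lemma fset2C (a b : nat) : [fset a; b] = [fset b; a].
Proof. exact: fsetUC. Qed.

Lemma fset2_inj (a b c d : nat) : [fset a; b] = [fset c; d] ->
  (a = c /\ b = d) \/ (a = d /\ b = c).
Proof.
move=> E.
have [] : a \in [fset c; d] /\ b \in [fset c; d] by rewrite -E !inE !eqxx orbT.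
have [] : c \in [fset a; b] /\ d \in [fset a; b] by rewrite E !inE !eqxx orbT.
by rewrite !inE => /orP[]/eqP ? /orP[]/eqP ? /orP[]/eqP ? /orP[]/eqP ?; lia.
Qed.

Lemma cardfs2P (X : {fset nat}) : #|` X| = 2 -> exists a b, a < b /\ X = [fset a; b].
Proof.
move=> X2; have: X != fset0 by rewrite -cardfs_eq0 X2.
case/fset0Pn => x xX.
have := cardfsD1 x X; rewrite xX X2 => /= E.
have /cardfs1P [y Ey] : #|` X `\ x| == 1 by rewrite -(eqn_add2l 1) -E.
have : y \in X `\ x by rewrite Ey inE.
rewrite in_fsetD1 => /andP [yx _].
have EX : X = [fset x; y] by rewrite -Ey fsetD1K.
case: (ltngtP x y) => [xy|yx'|xy]; [by exists x, y | by exists y, x; rewrite EX fset2C|].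
by rewrite xy eqxx in yx.
Qed.

Lemma fsetI_eq0P (X Y : {fset nat}) :
  X `&` Y = fset0 <-> forall h, h \in X -> h \notin Y.
Proof.
split=> [/eqP | /fdisjointP /disjoint_fsetI0 //].
by rewrite fsetI_eq0 => /fdisjointP.
Qed.

Definition fset_iota (k : nat) (X : {fset nat}) : {fset nat} := [fset iota_k k h | h in X].

Section FsetIota.
Variable k : nat.
Local Notation io := (iota_k k).

Lemma mem_fset_iota (X : {fset nat}) h : (io h \in fset_iota k X) = (h \in X).
Proof. exact/mem_imfset/iota_k_inj. Qed.

Lemma fset_iota_inj : injective (fset_iota k).
Proof. by move=> X Y E; apply/fsetP => h; rewrite -!(mem_fset_iota _ h) E. Qed.

Lemma card_fset_iota (X : {fset nat}) : #|` fset_iota k X| = #|` X|.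
Proof. exact/card_imfset/iota_k_inj. Qed.

Lemma fset_iota2 a b : fset_iota k [fset a; b] = [fset io a; io b].
Proof. by rewrite /fset_iota imfsetU1 imfset_fset1. Qed.

Lemma fset_iota_neq (X : {fset nat}) h : h \in fset_iota k X -> h != k /\ h != k.+1.
Proof. by case/imfsetP => x _ ->; apply: iota_k_neq. Qed.

Lemma mem_I_k_iota (B : {fset {fset nat}}) X : (fset_iota k X \in I_k k B) = (X \in B).
Proof.
rewrite /I_k in_fsetU in_fset1.
have -> : (fset_iota k X == [fset k; k.+1]) = false.
  apply/negbTE/negP => /eqP E.
  have : k \in fset_iota k X by rewrite E !inE eqxx.
  by case/fset_iota_neq => /eqP.
by rewrite orbF (mem_imfset _ _ fset_iota_inj).
Qed.

Lemma mem_I_kP (B : {fset {fset nat}}) (Y : {fset nat}) : Y \in I_k k B ->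
  Y = [fset k; k.+1] \/ exists2 X, X \in B & Y = fset_iota k X.
Proof.
by rewrite /I_k in_fsetU in_fset1 => /orP [/imfsetP [X XB ->]|/eqP ->];
  [right; exists X | left].
Qed.

Lemma mem_I_k_adjacent (B : {fset {fset nat}}) (Y : {fset nat}) : (k \in Y) || (k.+1 \in Y) ->
  (Y \in I_k k B) = (Y == [fset k; k.+1]).
Proof.
move=> kY; apply/idP/eqP => [/mem_I_kP [//|[X _ EY]] | ->]; last first.
  by rewrite /I_k !inE eqxx orbT.
by move: kY; rewrite EY => /orP [] /fset_iota_neq []; rewrite eqxx.
Qed.

End FsetIota.

Lemma pairwise_memP (T : eqType) (r : rel T) (s : seq T) p q :
  symmetric r -> pairwise r s -> p \in s -> q \in s -> p != q -> r p q.
Proof.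
move=> rC; elim: s => // x s IH; rewrite pairwise_cons => /andP [/allP rx rs].
rewrite !inE => /orP [/eqP->|ps] /orP [/eqP->|qs]; rewrite ?eqxx // => pq.
- exact: rx.
- by rewrite rC; apply: rx.
- exact: IH.
Qed.

Section Tiling.
Variable B : {fset {fset nat}}.

(* [B1_tiling B x y]: the interval [x+1, y] is a concatenation, from left to
   right, of intervals [a, b] with ab in B^1. *)
Inductive B1_tiling : nat -> nat -> Prop :=
| tiling_nil g : B1_tiling g g
| tiling_cons g c g' : inB1 B g.+1 c -> B1_tiling c g' -> B1_tiling g g'.

Lemma tiling_leq g g' : B1_tiling g g' -> g <= g'.
Proof. by elim=> // g0 c g1 [? _ _] _; lia. Qed.

Lemma tiling_trans a b c : B1_tiling a b -> B1_tiling b c -> B1_tiling a c.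
Proof. by elim=> // g c0 g' H _ IH /IH; apply: tiling_cons. Qed.

Lemma tiling_first x y : B1_tiling x y -> x = y \/ exists2 c, inB1 B x.+1 c & c <= y.
Proof. by case=> [g|g c g' gc /tiling_leq]; [left | right; exists c]. Qed.

Lemma covered0_nil i j : j < i -> covered0 B i j.
Proof.
move=> ji; exists [::]; split; first by split=> // p; rewrite in_nil.
by move=> h; split=> [|[p]]; rewrite ?in_nil //; lia.
Qed.

Lemma B1_intervals_filter s (P : pred (nat * nat)) :
  B1_intervals B s -> B1_intervals B (filter P s).
Proof.
by case=> sB sP; split; [move=> p; rewrite mem_filter => /andP [_ /sB] | exact: pairwise_filter].
Qed.

Lemma covering_bounds (s : seq (nat * nat)) i j : (forall p, p \in s -> inB1 B p.1 p.2) ->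
  (forall h, i <= h <= j <-> exists2 p, p \in s & p.1 <= h <= p.2) ->
  forall p, p \in s -> [/\ i <= p.1, p.2 <= j & p.1 < p.2].
Proof.
move=> sB scov p ps; have [p12 _ _] := sB p ps.
have /scov ? : exists2 q, q \in s & q.1 <= p.1 <= q.2 by exists p => //; lia.
have /scov ? : exists2 q, q \in s & q.1 <= p.2 <= q.2 by exists p => //; lia.
by split; lia.
Qed.

Lemma tiling_covered0 x y : B1_tiling x y -> covered0 B x.+1 y.
Proof.
elim=> [g|g c g' gc /tiling_leq cg' [s [[sB sP] scov]]]; first exact: covered0_nil.
have ssub := covering_bounds sB scov; have [gc1 _ _] := gc.
exists ((g.+1, c) :: s); split; first split.
- by move=> p; rewrite inE => /orP [/eqP->|/sB].
- rewrite pairwise_cons sP andbT; apply/allP => q /ssub /= [? ? ?].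
  by apply/orP; left; lia.
- move=> h; split=> [hg|[p]].
  + case: (leqP h c) => hc; first by exists (g.+1, c); rewrite ?inE ?eqxx //=; lia.
    by have [|p ps ?] := (scov h).1; [lia | exists p; rewrite // inE ps orbT].
  + by rewrite inE => /orP [/eqP->/=|/ssub [? ? ?]]; lia.
Qed.

Lemma covered0_tiling x y : x <= y -> covered0 B x.+1 y -> B1_tiling x y.
Proof.
have [n] := ubnP (y - x); elim: n x => // n IH x yxn xy [s [[sB sP] scov]].
case: (eqVneq x y) => [->|xy']; first exact: tiling_nil.
have ssub := covering_bounds sB scov.
have [|[a b] ps /= xab] := (scov x.+1).1; first lia.
have /= [? ? ?] := ssub _ ps; have ax : a = x.+1 by lia.
apply: (@tiling_cons _ b); first by rewrite -ax; apply: sB ps.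
apply: IH; [lia | lia |].
exists [seq q <- s | b < q.1]; split; first exact: B1_intervals_filter.
move=> h; split=> [hy|[[c d]]].
- have [|[c d] qs /= hq] := (scov h).1; first lia.
  exists (c, d) => //; rewrite mem_filter qs andbT /=.
  have /= [? ? ?] := ssub _ qs.
  case: (eqVneq (c, d) (a, b)) => [[? ?]|qp]; first by subst; lia.
  by have /orP /= := pairwise_memP (fun _ _ => orbC _ _) sP qs ps qp; lia.
- by rewrite mem_filter => /andP [/= bc /ssub /= [? ? ?]] /=; lia.
Qed.

Lemma covered0E x y : x <= y -> covered0 B x.+1 y <-> B1_tiling x y.
Proof. by move=> xy; split; [apply: covered0_tiling | apply: tiling_covered0]. Qed.

Lemma covered1_split i j : 0 < i -> covered1 B i j ->
  exists u, [/\ i <= u <= j, covered0 B i u.-1 & covered0 B u.+1 j].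
Proof.
move=> i0 [u [s [sI [su scov]]]].
have iuj : i <= u <= j by apply/(scov u).2; left.
have side p : p \in s -> (p.2 < u) || (u < p.1).
  by move/su; rewrite negb_and -!ltnNge orbC.
have inside p h : p \in s -> p.1 <= h <= p.2 -> i <= h <= j.
  by move=> ps ph; apply/scov; right; exists p.
exists u; split=> //.
- exists [seq p <- s | p.2 < u]; split; first exact: B1_intervals_filter.
  move=> h; split=> [hu|[[a b]]].
  + have [|?|[[a b] ps /= hab]] := (scov h).1; [lia | lia |].
    exists (a, b) => //; rewrite mem_filter ps andbT /=.
    by have /= := side _ ps; lia.
  + by rewrite mem_filter => /andP [/= bu ps] hab; have := inside _ h ps hab; lia.
- exists [seq p <- s | u < p.1]; split; first exact: B1_intervals_filter.
  move=> h; split=> [hu|[[a b]]].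
  + have [|?|[[a b] ps /= hab]] := (scov h).1; [lia | lia |].
    exists (a, b) => //; rewrite mem_filter ps andbT /=.
    by have /= := side _ ps; lia.
  + by rewrite mem_filter => /andP [/= ua ps] hab; have := inside _ h ps hab; lia.
Qed.

Lemma covered1_join i j u : i <= u <= j -> covered0 B i u.-1 -> covered0 B u.+1 j ->
  covered1 B i j.
Proof.
move=> iuj [s1 [[s1B s1P] cov1]] [s2 [[s2B s2P] cov2]].
have sub1 := covering_bounds s1B cov1; have sub2 := covering_bounds s2B cov2.
exists u, (s1 ++ s2); split; first split.
- by move=> p; rewrite mem_cat => /orP [/s1B|/s2B].
- rewrite pairwise_cat s1P s2P !andbT; apply/allrelP => [[a b] [c d]] /sub1 + /sub2.
  by rewrite /= => -[? ? ?] [? ? ?]; apply/orP; left; lia.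
split.
- move=> [a b]; rewrite mem_cat negb_and -!ltnNge.
  by case/orP => [/sub1|/sub2] /= [? ? ?]; apply/orP; [right|left]; lia.
move=> h; split=> [hij|[->|[[a b]]]]; [|lia|].
- case: (ltngtP h u) => hu; last by left.
  + by have [|p ps ?] := (cov1 h).1; [lia | right; exists p; rewrite // mem_cat ps].
  + by have [|p ps ?] := (cov2 h).1; [lia | right; exists p; rewrite // mem_cat ps orbT].
- by rewrite mem_cat => /orP [/sub1|/sub2] /= [? ? ?]; lia.
Qed.

End Tiling.

Section PairsOfI_k.
Variables (k : nat) (B : {fset {fset nat}}).
Local Notation io := (iota_k k).
Local Notation BB := (I_k k B).

Lemma inB1_iota a b : inB1 BB (io a) (io b) <-> inB1 B a b.
Proof. by rewrite /inB1 -fset_iota2 mem_I_k_iota ltn_iota odd_sub_iota. Qed.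

Lemma inB0_iota a b : inB0 BB (io a) (io b) <-> inB0 B a b.
Proof. by rewrite /inB0 -fset_iota2 mem_I_k_iota ltn_iota odd_sub_iota. Qed.

Lemma inB1_I_k_adjacent : inB1 BB k k.+1.
Proof. by split; rewrite ?subSnn // /I_k !inE eqxx orbT. Qed.

Lemma pair_I_kP a b : [fset a; b] \in BB ->
  (a = k /\ b = k.+1) \/ (a = k.+1 /\ b = k) \/
  [/\ a != k, a != k.+1, b != k & b != k.+1].
Proof.
move=> abB; case: (boolP [|| a == k, a == k.+1, b == k | b == k.+1]) => [kab|]; last first.
  by rewrite !negb_or => /and4P ?; right; right.
have : (k \in [fset a; b]) || (k.+1 \in [fset a; b]).
  by rewrite !inE; case/or4P: kab => /eqP->; rewrite eqxx ?orbT.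
by move/(mem_I_k_adjacent B) => E; move: abB; rewrite E => /eqP/fset2_inj [] []; lia.
Qed.

Lemma inB1_I_kP a b : inB1 BB a b ->
  (a = k /\ b = k.+1) \/ exists a' b', [/\ a = io a', b = io b' & inB1 B a' b'].
Proof.
move=> ab; have [ab' _ abB] := ab.
case: (pair_I_kP abB) => [|[|[? ? ? ?]]]; [by left | lia | right].
exists (iota_inv k a), (iota_inv k b); rewrite !iota_invK //.
by split=> //; apply/inB1_iota; rewrite !iota_invK.
Qed.

Lemma inB0_I_kP a b : inB0 BB a b ->
  exists a' b', [/\ a = io a', b = io b' & inB0 B a' b'].
Proof.
move=> ab; have [ba odd_ab abB] := ab.
case: (pair_I_kP abB) => [|[|[? ? ? ?]]]; first lia.
  by case=> ? ?; subst; rewrite subSnn in odd_ab.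
exists (iota_inv k a), (iota_inv k b); rewrite !iota_invK //.
by split=> //; apply/inB0_iota; rewrite !iota_invK.
Qed.

Lemma B0_nonempty_I_k : B0_nonempty BB <-> B0_nonempty B.
Proof.
split=> [[i [j /inB0_I_kP [a [b [_ _ ab]]]]]|[i [j ij]]]; first by exists a, b.
by exists (io i), (io j); apply/inB0_iota.
Qed.

Lemma in_supp_iota h : in_supp BB (io h) <-> in_supp B h.
Proof.
split=> [[X /mem_I_kP [->|[X' X'B ->]]]|[X XB hX]].
- by rewrite !inE => /orP [] /eqP E; have := iota_k_neq k h; rewrite E eqxx; case.
- by rewrite mem_fset_iota; exists X'.
- by exists (fset_iota k X); rewrite ?mem_I_k_iota ?mem_fset_iota.
Qed.

End PairsOfI_k.

Section TilingsOfI_k.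
Variables (k : nat) (B : {fset {fset nat}}).
Hypothesis k_gt0 : 0 < k.
Local Notation io := (iota_k k).
Local Notation BB := (I_k k B).

Lemma tiling_I_k_to_k g g' : B1_tiling BB g g' -> g' = k -> g = k.
Proof.
elim=> // g0 c g1 gc _ IH /IH ck; subst c.
case: (inB1_I_kP gc) => [[_ ?]|[a [b [_ E _]]]]; first lia.
by have := iota_k_neq k b; rewrite -E eqxx; case.
Qed.

Lemma tiling_I_k_from_k g g' : B1_tiling BB g g' -> g = k -> g' = k.
Proof.
case=> // g0 c g1 gc _ g0k; subst g0.
case: (inB1_I_kP gc) => [[? _]|[a [b [E _ _]]]]; first lia.
by have := iota_k_neq k a; rewrite -E eqxx; case.
Qed.

Lemma tiling_I_k x y : B1_tiling B x y -> B1_tiling BB (io x) (io y).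
Proof.
elim=> [g|g c g' gc _ IH]; first exact: tiling_nil.
have gc' : inB1 BB (io g.+1) (io c) by apply/inB1_iota.
case: (eqVneq g.+1 k) => gk.
- rewrite (iota_k_small (_ : g < k)); last lia.
  apply: (tiling_cons (c := k.+1)); first by rewrite gk; apply: inB1_I_k_adjacent.
  by move: gc'; rewrite iota_k_big ?gk // => /tiling_cons; apply.
- by move: gc'; rewrite iota_kS // => /tiling_cons; apply.
Qed.

Lemma tiling_I_k_inv g g' : B1_tiling BB g g' -> g != k -> g' != k ->
  B1_tiling B (iota_inv k g) (iota_inv k g').
Proof.
elim=> [g0|g0 c g1 gc _ IH] g0k g1k; first exact: tiling_nil.
case: (inB1_I_kP gc) => [[? ?]|[a [b [ga cb ab]]]].
- subst c; rewrite (_ : iota_inv k g0 = iota_inv k k.+1); first by apply: IH; lia.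
  by rewrite /iota_inv; case: ifP; case: ifP; lia.
- have g0k1 : g0.+1 != k by rewrite ga; case: (iota_k_neq k a).
  have -> : iota_inv k g0 = a.-1.
    by rewrite -(iota_kK k a) -ga /iota_inv; case: ifP; case: ifP; lia.
  have a0 : 0 < a by rewrite -(iota_k_gt0 k_gt0) -ga.
  apply: (tiling_cons (c := b)); first by rewrite prednK.
  by rewrite -(iota_kK k b) -cb; apply: IH; rewrite // cb; case: (iota_k_neq k b).
Qed.

Lemma covered0_I_k x y : covered0 B x.+1 y.-1 <-> covered0 BB (io x).+1 (io y).-1.
Proof.
case: (ltnP x y) => [xy|yx]; last first.
  have : io y <= io x by rewrite leq_iota.
  by split=> _; apply: covered0_nil; lia.
have xy' : io x < io y by rewrite ltn_iota.
rewrite !covered0E; try lia; split=> [/tiling_I_k|].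
- case: (eqVneq y k) => [yk|yk]; last by rewrite iota_k_pred.
  subst y; rewrite (iota_k_small (_ : k.-1 < k)) ?(iota_k_big (leqnn k)); last lia.
  move/tiling_trans; apply; apply: (tiling_cons (c := k.+1)); last exact: tiling_nil.
  by rewrite prednK //; apply: inB1_I_k_adjacent.
- move/tiling_I_k_inv; rewrite iota_kK iota_inv_pred //; apply; first by case: (iota_k_neq k x).
  by have [_] := iota_k_neq k y; apply: contra_neq; lia.
Qed.

(* The pair {k, k+1} of I_k B cannot be cut by the point of a 1-covering. *)
Lemma split_point_I_k_neq a b u : a != k -> b != k ->
  covered0 BB a.+1 u.-1 -> covered0 BB u.+1 b -> a < u <= b -> u != k /\ u != k.+1.
Proof.
move=> ak bk left right aub; split; apply/eqP => uk; subst u.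
- move: right; rewrite covered0E; last lia.
  by move/tiling_I_k_from_k => /(_ erefl) bk'; rewrite bk' eqxx in bk.
- move: left; rewrite covered0E /=; last lia.
  by move/tiling_I_k_to_k => /(_ erefl) ak'; rewrite ak' eqxx in ak.
Qed.

Lemma covered1_I_k x y : covered1 B x.+1 y.-1 <-> covered1 BB (io x).+1 (io y).-1.
Proof.
split=> /covered1_split [//|u [xuy left right]].
- apply: (covered1_join (u := io u)); try exact/covered0_I_k.
  by have := ltn_iota k x u; have := ltn_iota k u y; lia.
- have [uk uk1] : u != k /\ u != k.+1.
    apply: (split_point_I_k_neq _ _ left right); [by case: (iota_k_neq k x) | | lia].
    by have [_] := iota_k_neq k y; apply: contra_neq; lia.
  rewrite -(iota_invK uk uk1) in xuy left right.
  apply: (covered1_join (u := iota_inv k u)); try exact/covered0_I_k.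
  by have := ltn_iota k x (iota_inv k u); have := ltn_iota k (iota_inv k u) y; lia.
Qed.

End TilingsOfI_k.

Lemma star_seq_eq B s f g : (forall r, 0 < r <= s.*2 -> f r = g r) ->
  star_seq B s f -> star_seq B s g.
Proof.
move=> fg [C1 C2 C3 C4 C5]; split.
- by move=> r rs; rewrite -!fg; [apply: C1 | lia | lia].
- by move=> i j /C2 [r [rs -> ->]]; exists r; split=> //; apply: fg; lia.
- by move=> r rs; rewrite -!fg; [apply: C3 | lia | lia].
- by move=> r rs; rewrite -!fg; [apply: C4 | lia | lia].
- by move=> r rs; rewrite -!fg; [apply: C5 | lia | lia].
Qed.

Lemma star_seq_outer B s f : star_seq B s f -> 0 < s -> inB0 B (f s.*2) (f 1).
Proof. by case=> C1 _ _ _ _ s0; have := C1 1; rewrite subn1; apply; lia. Qed.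

(* The last conjuncts of [in_Xplus] and [in_Xplus'], which constrain the two
   ends of the B^0 sequence. *)
Definition Xplus_ends (M : nat) (B : {fset {fset nat}}) (s : nat) (f : nat -> nat) : Prop :=
  s = 0 \/ (odd s /\
    ((covered1 B 1 (f 1).-1 /\ covered0 B (f s.*2).+1 M.-1) \/
     (covered0 B 1 (f 1).-1 /\ covered1 B (f s.*2).+1 M.-1))).

Definition even_uB (M : nat) (B : {fset {fset nat}}) : Prop :=
  exists s f u, [/\ star_seq B s f, 1 <= s, is_uB M B s f u & ~~ odd u].

Section StarSeqOfI_k.
Variables (k : nat) (B : {fset {fset nat}}).
Hypothesis k_gt0 : 0 < k.
Local Notation io := (iota_k k).
Local Notation BB := (I_k k B).

Lemma star_seq_I_k s f : star_seq B s f <-> star_seq BB s (io \o f).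
Proof.
split=> -[C1 C2 C3 C4 C5]; split.
- by move=> r rs; apply/inB0_iota/C1.
- by move=> i j /inB0_I_kP [a [b [-> -> /C2 [r [rs -> ->]]]]]; exists r.
- by move=> r rs /=; rewrite ltn_iota; apply: C3.
- by move=> r rs /=; apply/(covered0_I_k B k_gt0)/C4.
- by move=> r rs /=; apply/(covered0_I_k B k_gt0)/C5.
- by move=> r rs; apply/(inB0_iota k)/C1.
- by move=> i j /(inB0_iota k) /C2 [r [rs /iota_k_inj -> /iota_k_inj ->]]; exists r.
- by move=> r rs; rewrite -(ltn_iota k); apply: C3.
- by move=> r rs; apply/(covered0_I_k B k_gt0)/C4.
- by move=> r rs; apply/(covered0_I_k B k_gt0)/C5.
Qed.

Lemma star_seq_I_k_iota s f : star_seq BB s f ->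
  forall r, 0 < r <= s.*2 -> f r = io (iota_inv k (f r)).
Proof.
case=> C1 _ _ _ _ r rs.
case: (leqP r s) => rs'.
  by have /inB0_I_kP [a [b [_ -> _]]] := C1 r (ltac:(lia)); rewrite iota_kK.
have := C1 (s.*2.+1 - r) (ltac:(lia)); rewrite (_ : s.*2.+1 - (s.*2.+1 - r) = r); last lia.
by case/inB0_I_kP => [a [b [-> _ _]]]; rewrite iota_kK.
Qed.

Lemma star_seq_I_k_inv s f : star_seq BB s f -> star_seq B s (iota_inv k \o f).
Proof. by move=> sf; apply/star_seq_I_k; apply: star_seq_eq (star_seq_I_k_iota sf) sf. Qed.

End StarSeqOfI_k.

Lemma interval_pred_succ a u v : (a.+1 <= u <= v.-1) = (a < u < v).
Proof. by apply/idP/idP; lia. Qed.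

Lemma in_supp_I_k_last k M B : k <= M -> (~ in_supp (I_k k B) M.+2 <-> ~ in_supp B M).
Proof. by move=> kM; rewrite -(iota_k_big kM) in_supp_iota. Qed.

Lemma in_supp_I_k_penultimate k M B : k < M ->
  (~ in_supp (I_k k B) M.+1 <-> ~ in_supp B M.-1).
Proof. by move=> kM; rewrite (_ : M.+1 = iota_k k M.-1) ?in_supp_iota // iota_k_big; lia. Qed.

Section XplusOfI_k.
Variables (k M : nat) (B : {fset {fset nat}}).
Hypotheses (k_gt0 : 0 < k) (kM : k <= M).
Local Notation io := (iota_k k).
Local Notation BB := (I_k k B).

Let io0 : io 0 = 0. Proof. exact: iota_k0. Qed.
Let ioM : M.+1 = (io M).-1. Proof. by rewrite iota_k_big. Qed.
Let cov0 := covered0_I_k B k_gt0.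
Let cov1 := covered1_I_k B k_gt0.
Let cov0_first y : covered0 B 1 y.-1 <-> covered0 BB 1 (io y).-1.
Proof. by have := cov0 0 y; rewrite io0. Qed.
Let cov1_first y : covered1 B 1 y.-1 <-> covered1 BB 1 (io y).-1.
Proof. by have := cov1 0 y; rewrite io0. Qed.

Lemma is_uB_I_k s f u : is_uB M B s f u <-> is_uB M.+2 BB s (io \o f) (io u).
Proof.
rewrite /is_uB /= ioM !interval_pred_succ !ltn_iota iota_k_gt0 //.
split=> [[[? ? ? ?]|[? ? ? ?]]|[[? ? ? ?]|[? ? ? ?]]]; [left|right|left|right];
  split=> //; by [apply/cov0 | apply/cov0_first].
Qed.

Lemma Xplus_ends_I_k s f : Xplus_ends M B s f <-> Xplus_ends M.+2 BB s (io \o f).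
Proof.
rewrite /Xplus_ends /= ioM.
split=> [[->|[? [[? ?]|[? ?]]]]|[->|[? [[? ?]|[? ?]]]]]; try by left.
- by right; split=> //; left; split; [apply/cov1_first | apply/cov0].
- by right; split=> //; right; split; [apply/cov0_first | apply/cov1].
- by right; split=> //; left; split; [apply/cov1_first | apply/cov0].
- by right; split=> //; right; split; [apply/cov0_first | apply/cov1].
Qed.

Lemma is_uB_I_k_iota s f u : is_uB M.+2 BB s (io \o f) u -> u = io (iota_inv k u).
Proof.
rewrite /is_uB /= => uB; suff [uk uk1] : u != k /\ u != k.+1 by rewrite iota_invK.
case: uB => [[_ ub left right]|[_ ub left right]].
- apply: (split_point_I_k_neq k_gt0 (a := 0) _ _ left right); [by rewrite eq_sym -lt0n | | lia].
  by have [_] := iota_k_neq k (f 1); apply: contra_neq; lia.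
- apply: (split_point_I_k_neq k_gt0 (b := M.+1) _ _ left right); [| by apply/eqP; lia | lia].
  by case: (iota_k_neq k (f s.*2)).
Qed.

Lemma in_P_I_k : in_P M B <-> in_P M.+2 BB.
Proof.
split=> -[P1 P2]; split.
- move=> X /mem_I_kP [->|[Y YB ->]].
    by rewrite cardfs2; split=> [|h]; [case: eqVneq; lia | rewrite !inE => /orP [] /eqP ->; lia].
  rewrite card_fset_iota; have [Y2 YM] := P1 Y YB; split=> // _ /imfsetP [h /= /YM hY ->].
  by have := iota_k_bounds k h; rewrite /iota_k; case: ifP; lia.
- move=> X Y /mem_I_kP [->|[X' X'B ->]] /mem_I_kP [->|[Y' Y'B ->]]; rewrite ?eqxx // => XY.
  + by apply/fsetI_eq0P => h; rewrite !inE => /orP [] /eqP ->; apply/negP => /fset_iota_neq [];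
      rewrite eqxx.
  + by apply/fsetI_eq0P => h /fset_iota_neq [hk hk1]; rewrite !inE negb_or hk hk1.
  + have /fsetI_eq0P D : X' `&` Y' = fset0 by apply: P2 => //; apply: contra_neq XY => ->.
    by apply/fsetI_eq0P => _ /imfsetP [h /= /D hY ->]; rewrite mem_fset_iota.
- move=> X XB; have [X2 XM] := P1 (fset_iota k X) (etrans (mem_I_k_iota k B X) XB).
  rewrite card_fset_iota in X2; split=> // h hX.
  by have := XM (io h); rewrite mem_fset_iota /iota_k => /(_ hX); case: ifP; lia.
- move=> X Y XB YB XY; apply/fsetI_eq0P => h hX; rewrite -(mem_fset_iota k).
  have XY' : fset_iota k X != fset_iota k Y by apply: contra_neq XY => /fset_iota_inj.
  have /fsetI_eq0P := P2 _ _ (etrans (mem_I_k_iota k B X) XB) (etrans (mem_I_k_iota k B Y) YB) XY'.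
  by apply; rewrite mem_fset_iota.
Qed.

Lemma B1_nested_I_k :
  (forall i j, inB1 BB i j -> covered0 BB i.+1 j.-1) <->
  (forall i j, inB1 B i j -> covered0 B i.+1 j.-1).
Proof.
split=> nested i j; first by move/(inB1_iota k)/nested/cov0.
case/inB1_I_kP => [[-> ->]|[a [b [-> -> /nested /cov0 //]]]].
exact: covered0_nil.
Qed.

Lemma Xplus_ends_ex_I_k :
  (exists s f, star_seq BB s f /\ Xplus_ends M.+2 BB s f) <->
  (exists s f, star_seq B s f /\ Xplus_ends M B s f).
Proof.
split=> [[s [f [sf ends]]]|[s [f [sf ends]]]]; last first.
  by exists s, (io \o f); split; [apply/(star_seq_I_k B k_gt0) | apply/Xplus_ends_I_k].
exists s, (iota_inv k \o f); split; first exact: star_seq_I_k_inv.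
apply/Xplus_ends_I_k; case: ends => [->|[odd_s ends]]; [by left | right; split=> //].
have s0 := odd_gt0 odd_s.
have fE := star_seq_I_k_iota k_gt0 sf.
by rewrite /= -!fE //; lia.
Qed.

Lemma even_uB_I_k : even_uB M.+2 BB <-> even_uB M B.
Proof.
split=> [[s [f [u [sf s0 uB u_even]]]]|[s [f [u [sf s0 uB u_even]]]]]; last first.
  exists s, (io \o f), (io u); split=> //; [exact/(star_seq_I_k B k_gt0) | exact/is_uB_I_k |].
  by rewrite odd_iota_k.
have fE := star_seq_I_k_iota k_gt0 sf.
have uB' : is_uB M.+2 BB s (io \o (iota_inv k \o f)) u.
  by move: uB; rewrite /is_uB /= -!fE //; lia.
have uE := is_uB_I_k_iota uB'.
exists s, (iota_inv k \o f), (iota_inv k u); split=> //; first exact: star_seq_I_k_inv.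
  by apply/is_uB_I_k; rewrite -uE.
by rewrite -(odd_iota_k k) -uE.
Qed.

End XplusOfI_k.

Lemma in_Xplus'_I_k M k B : 0 < k <= M -> B0_nonempty B \/ k < M ->
  in_Xplus' M.+2 (I_k k B) <-> in_Xplus' M B.
Proof.
case/andP=> k0 kM B0_or_kM.
have B0E := B0_nonempty_I_k k B.
have kM_of_nB0 : ~ B0_nonempty B -> k < M by case: B0_or_kM.
split=> -[[[P nested [s [f sf]]] supp ends] tail]; (split; first split; first split).
- exact/(in_P_I_k B k0 kM).
- exact/(B1_nested_I_k B k0).
- by exists s, (iota_inv k \o f); apply: star_seq_I_k_inv.
- exact/(in_supp_I_k_last B kM).
- exact/(Xplus_ends_ex_I_k B k0 kM).
- case: tail => [[/B0E nB0 nsupp]|[/B0E ? ?]]; [left | right].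
    by split=> //; apply/(in_supp_I_k_penultimate B (kM_of_nB0 nB0)).
  by split=> //; apply/(even_uB_I_k B k0 kM).
- exact/(in_P_I_k B k0 kM).
- exact/(B1_nested_I_k B k0).
- by exists s, (iota_k k \o f); apply/(star_seq_I_k B k0).
- exact/(in_supp_I_k_last B kM).
- exact/(Xplus_ends_ex_I_k B k0 kM).
- case: tail => [[nB0 nsupp]|[? ?]]; [left | right].
    by split; [move/B0E | apply/(in_supp_I_k_penultimate B (kM_of_nB0 nB0))].
  by split; [apply/B0E | apply/(even_uB_I_k B k0 kM)].
Qed.

Lemma in_P_pair_bounds M B a b : in_P M B -> [fset a; b] \in B -> 0 < a <= M /\ 0 < b <= M.
Proof. by case=> P _ /P [_ abM]; split; apply: abM; rewrite !inE eqxx ?orbT. Qed.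

Lemma in_P_no_pairs M B : in_P M B ->
  (forall a b, ~ inB1 B a b) -> (forall a b, ~ inB0 B a b) -> B = fset0.
Proof.
move=> [P _] no1 no0; apply/fsetP => X; rewrite in_fset0; apply/negbTE/negP => XB.
have [/cardfs2P [a [b [ab EX]]] _] := P X XB; subst X.
case: (boolP (odd (b - a))) => ab_odd; first by apply: (no1 a b).
by apply: (no0 b a); split; rewrite // fset2C.
Qed.

Lemma nested_B1_adjacent B a b : (forall i j, inB1 B i j -> covered0 B i.+1 j.-1) ->
  inB1 B a b -> exists j, inB1 B j j.+1.
Proof.
move=> nested; have [n] := ubnP (b - a); elim: n a b => // n IH a b ban ab.
have [a_b _ _] := ab; move: (nested a b ab); rewrite covered0E; last lia.
case/tiling_first => [ab1|[c ac cb]]; first by exists a; rewrite ab1 (ltn_predK a_b) -ab1.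
by have [ac' _ _] := ac; apply: (IH a.+1 c); [lia | exact: ac].
Qed.

Lemma in_Xplus'_adjacent M B a b : in_Xplus' M B -> inB1 B a b ->
  exists j, [/\ [fset j; j.+1] \in B, 0 < j, j.+1 < M & (~ B0_nonempty B -> j.+2 < M)].
Proof.
move=> [[[P nested _] suppM _] tail] /(nested_B1_adjacent nested) [j [_ _ jB]].
have [j0 j1M] := in_P_pair_bounds P jB.
have supp_j1 : in_supp B j.+1 by exists [fset j; j.+1]; rewrite // !inE eqxx orbT.
have j1M' : j.+1 <> M by move=> E; apply: suppM; rewrite -E.
exists j; split=> //; [lia | lia | move=> nB0].
case: tail => [[_ suppM1]|[]] //.
have : j.+1 <> M.-1 by move=> E; apply: suppM1; rewrite -E.
lia.
Qed.

Lemma I_k_of_adjacent M B j : in_P M B -> [fset j; j.+1] \in B ->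
  B = I_k j [fset [fset iota_inv j h | h in X] | X : {fset nat} in B `\ [fset j; j.+1]].
Proof.
move=> [_ disj] jB; set J := [fset j; j.+1].
have iotaK X : X \in B -> X != J -> fset_iota j [fset iota_inv j h | h in X] = X.
  move=> XB XJ; have /fsetI_eq0P D := disj X J XB jB XJ.
  have hK h : h \in X -> iota_k j (iota_inv j h) = h.
    by move=> /D; rewrite !inE negb_or => /andP [? ?]; rewrite iota_invK.
  apply/fsetP => h; apply/imfsetP/idP => [[_ /imfsetP [h' /= h'X ->] ->]|hX].
    by rewrite hK.
  by exists (iota_inv j h); [apply/imfsetP; exists h | rewrite hK].
apply/fsetP => Y; rewrite /I_k -/J in_fsetU in_fset1.
case: (eqVneq Y J) => [->|YJ]; rewrite ?jB ?orbT // orbF.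
apply/idP/imfsetP => [YB|[_ /imfsetP [X /= + ->] ->]].
  exists [fset iota_inv j h | h in Y]; last exact: esym (iotaK Y YB YJ).
  by apply/imfsetP; exists Y; rewrite //= in_fsetD1 YJ.
by rewrite in_fsetD1 => /andP [XJ XB]; rewrite -/(fset_iota j _) iotaK.
Qed.

Lemma star_seq_no_B0 B f : (forall i j, ~ inB0 B i j) -> star_seq B 0 f.
Proof. by move=> no0; split=> [r|i j /no0|r|r|r] //; lia. Qed.

Lemma in_Xplus'_fset0 M : in_Xplus' M fset0.
Proof.
have no0 i j : ~ inB0 fset0 i j by case=> _ _; rewrite in_fset0.
have no_supp h : ~ in_supp fset0 h by case=> X; rewrite in_fset0.
split; first split; first split.
- by split=> X; rewrite in_fset0.
- by move=> i j [_ _]; rewrite in_fset0.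
- by exists 0, id; apply: star_seq_no_B0.
- exact: no_supp.
- by exists 0, id; split; [apply: star_seq_no_B0 | left].
- by left; split=> // -[i [j /no0]].
Qed.

Section PrSets.
Variables (m s : nat).
Hypotheses (s_odd : odd s) (sm : s <= m).
Local Notation M := m.*2.+3.
Local Notation Pr := [fset [fset M - r.+1; r] | r : nat in iota 1 s].

Let s_gt0 : 0 < s := odd_gt0 s_odd.

Lemma mem_PrP X : X \in Pr <-> exists2 r, 0 < r <= s & X = [fset M - r.+1; r].
Proof.
split=> [/imfsetP [r /= + ->]|[r rs ->]]; first by rewrite mem_iota => rs; exists r => //; lia.
by apply/imfsetP; exists r; rewrite //= mem_iota; lia.
Qed.

Lemma Pr_pairP a b : [fset a; b] \in Pr -> a < b ->
  exists r, [/\ 0 < r <= s, a = r & b = M - r.+1].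
Proof. by case/mem_PrP => r rs /fset2_inj ab a_b; exists r; split=> //; lia. Qed.

Definition Pr_seq r := if r <= s then r else M - (s.*2.+2 - r).

Lemma Pr_seq_lo r : r <= s -> Pr_seq r = r.
Proof. by rewrite /Pr_seq => ->. Qed.

Lemma Pr_seq_hi r : s < r -> Pr_seq r = M - (s.*2.+2 - r).
Proof. by move=> sr; rewrite /Pr_seq ifN // -ltnNge. Qed.

Lemma Pr_no_B1 a b : ~ inB1 Pr a b.
Proof.
case=> a_b ab_odd /Pr_pairP /(_ a_b) [r [rs ar br]].
by move: ab_odd; rewrite ar br -subnDA; lia.
Qed.

Lemma star_seq_Pr : star_seq Pr s Pr_seq.
Proof.
split.
- move=> r rs; rewrite (Pr_seq_lo (r := r)) ?(Pr_seq_hi (r := s.*2.+1 - r)); try lia.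
  by split; [lia | lia | apply/mem_PrP; exists r => //; congr [fset _; _]; lia].
- move=> i j [ji _]; rewrite fset2C => /Pr_pairP /(_ ji) [r [rs -> ->]].
  exists r; rewrite (Pr_seq_lo (r := r)) ?(Pr_seq_hi (r := s.*2.+1 - r)); try lia.
  by split=> //; lia.
- move=> r rs; case: (ltngtP r s) => rs'.
  + by rewrite !Pr_seq_lo; lia.
  + by rewrite !Pr_seq_hi; lia.
  + by rewrite (Pr_seq_lo (r := r)) ?(Pr_seq_hi (r := r.+1)); lia.
- by move=> r rs; rewrite !Pr_seq_lo; try lia; apply: covered0_nil; lia.
- by move=> r rs; rewrite !Pr_seq_hi; try lia; apply: covered0_nil; lia.
Qed.

Lemma in_Xplus'_Pr : in_Xplus' M Pr.
Proof.
have first1 : Pr_seq 1 = 1 by rewrite Pr_seq_lo.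
have last2 : Pr_seq s.*2 = M - 2 by rewrite Pr_seq_hi; lia.
have no_supp : ~ in_supp Pr M.
  by case=> X /mem_PrP [r rs ->]; rewrite !inE => /orP [] /eqP; lia.
have is_uB_Pr : is_uB M Pr s Pr_seq M.-1.
  by right; rewrite first1 last2; split; [exact: covered0_nil | lia | |]; apply: covered0_nil; lia.
split; first split; first split.
- split=> [X /mem_PrP [r rs ->]|X Y /mem_PrP [r rs ->] /mem_PrP [r' rs' ->] XY].
    split=> [|h]; first by rewrite cardfs2; case: eqVneq; lia.
    by rewrite !inE => /orP [] /eqP ->; lia.
  have rr' : r != r' by apply: contra_neq XY => ->.
  by apply/fsetI_eq0P => h; rewrite !inE => /orP [] /eqP -> ; apply/negP => /orP [] /eqP; lia.
- by move=> i j /Pr_no_B1.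
- by exists s, Pr_seq; apply: star_seq_Pr.
- exact: no_supp.
- exists s, Pr_seq; split; first exact: star_seq_Pr.
  right; split=> //; right; rewrite first1; split; first exact: covered0_nil.
  by apply: (covered1_join (u := M.-1)); rewrite ?last2; try apply: covered0_nil; lia.
- right; split.
    by exists (Pr_seq s.*2), (Pr_seq 1); apply: star_seq_outer star_seq_Pr _.
  by exists s, Pr_seq, M.-1; split=> //; [exact: star_seq_Pr | rewrite /= odd_double].
Qed.

End PrSets.

Lemma increasing_first_leq (f : nat -> nat) n : (forall r, 0 < r < n -> f r < f r.+1) ->
  forall r, 0 < r <= n -> f 1 <= f r.
Proof.
move=> f_incr; elim=> // r IH rn; case: (posnP r) => [->|r0] //.
by have := IH (ltac:(lia)); have := f_incr r (ltac:(lia)); lia.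
Qed.

Section NoB1.
Variable B : {fset {fset nat}}.
Hypothesis no1 : forall a b, ~ inB1 B a b.

Lemma noB1_covered0 x y : x <= y -> covered0 B x.+1 y -> x = y.
Proof. by move=> xy /(covered0E _ xy) /tiling_first [//|[c /no1]]. Qed.

Lemma noB1_covered1 x y : covered1 B x.+1 y -> y = x.+1.
Proof.
case/covered1_split=> // u [xuy left right].
by have := noB1_covered0 (_ : x <= u.-1) left; have := noB1_covered0 (_ : u <= y) right; lia.
Qed.

Lemma star_seq_noB1_succ s f : star_seq B s f ->
  forall r, 0 < r < s.*2 -> r != s -> f r.+1 = (f r).+1.
Proof.
case=> _ _ C3 C4 C5 r rs rs'; have := C3 r rs.
have cov : covered0 B (f r).+1 (f r.+1).-1.
  by case: (ltngtP r s) rs' => // rs'' _; [apply: C4 | apply: C5]; lia.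
by move=> fr; have := noB1_covered0 (_ : f r <= (f r.+1).-1) cov; lia.
Qed.

Lemma star_seq_noB1_lo s f : star_seq B s f -> f 1 = 1 -> forall r, 0 < r <= s -> f r = r.
Proof.
move=> sf f1; elim=> // r IH rs; case: (posnP r) => [->|r0] //.
by rewrite (star_seq_noB1_succ sf (r := r)) ?IH //; try lia; apply/eqP; lia.
Qed.

Lemma star_seq_noB1_hi s f : star_seq B s f ->
  forall r, 0 < r <= s -> f (s.*2.+1 - r) = (f s.*2).+1 - r.
Proof.
move=> sf; elim=> // r IH rs; case: (posnP r) => [->|r0]; first by rewrite !subn1.
have := star_seq_noB1_succ sf (r := s.*2.+1 - r.+1).
by rewrite (_ : (s.*2.+1 - r.+1).+1 = s.*2.+1 - r) ?IH; lia.
Qed.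

End NoB1.

Section NoB1Pr.
Variables (m : nat) (B : {fset {fset nat}}).
Hypothesis no1 : forall a b, ~ inB1 B a b.
Local Notation M := m.*2.+3.

Lemma star_seq_noB1_Pr s f : in_P M B -> star_seq B s f -> odd s ->
  f 1 = 1 -> f s.*2 = M - 2 -> in_Pr M B.
Proof.
move=> P sf s_odd f1 f2s; have s0 := odd_gt0 s_odd.
have lo := star_seq_noB1_lo no1 sf f1; have hi := star_seq_noB1_hi no1 sf.
rewrite f2s in hi; have [C1 C2 C3 _ _] := sf.
have sm : s <= m.
  have := C3 s (ltac:(lia)); rewrite lo; last lia.
  by rewrite (_ : s.+1 = s.*2.+1 - s) ?hi; lia.
right; exists s.+1; split; [by rewrite /= negbK | lia |].
apply/fsetP => Y; apply/idP/idP => [YB|/(mem_PrP s_odd sm) [r rs ->]]; last first.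
  by have [_ _] := C1 r rs; rewrite hi // lo.
apply/(mem_PrP s_odd sm); have [/cardfs2P [a [b [ab EY]]] _] := P.1 Y YB; subst Y.
case: (boolP (odd (b - a))) => [ab_odd|ab_even]; first by case: (no1 (And3 ab ab_odd YB)).
have /C2 [r [rs -> ->]] : inB0 B b a by split; rewrite // fset2C.
by exists r => //; rewrite lo ?hi // fset2C; congr [fset _; _]; lia.
Qed.

(* Without B^1 pairs a 1-covered first gap forces f 1 = 2; then u_B is
   either 1, which is odd, or comes with a B^0 endpoint 1 < f 1. *)
Lemma in_Xplus'_noB1_first_gap s f : in_Xplus' M B -> star_seq B s f -> 0 < s ->
  ~ covered1 B 1 (f 1).-1.
Proof.
move=> [[[P _ _] _ _] tail] sf s0 /(noB1_covered1 no1) f1.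
have [_ C2 C3 _ _] := sf.
case: tail => [[nB0 _]|[_ [s' [f' [u [sf' s'0 uB u_even]]]]]].
  by apply: nB0; exists (f s.*2), (f 1); apply: star_seq_outer.
case: uB => [[_ u1 left _]|[left _ _ _]].
  have := noB1_covered0 no1 (_ : 0 <= u.-1) left => /(_ isT) u1'.
  by move: u_even; rewrite (_ : u = 1) //; lia.
have B0' := star_seq_outer sf' s'0.
have [r [rs _ f'1]] := C2 _ _ B0'.
have [_ _ /(in_P_pair_bounds P) [_ f'1_gt0]] := B0'.
have := increasing_first_leq C3 (_ : 0 < r <= s.*2).
by have := noB1_covered0 no1 (_ : 0 <= (f' 1).-1) left; lia.
Qed.

Lemma in_Xplus'_noB1 : in_Xplus' M B -> in_Pr M B.
Proof.
move=> X; have [[[P _ _] _ [s [f [sf ends]]]] _] := X.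
case: ends => [s0|[s_odd [[first_gap _]|[first_gap last_gap]]]].
- have [_ C2 _ _ _] := sf.
  by left; apply: (in_P_no_pairs P no1) => i j /C2 [r [rs _ _]]; lia.
- by case: (in_Xplus'_noB1_first_gap X sf (odd_gt0 s_odd) first_gap).
- apply: (star_seq_noB1_Pr P sf s_odd).
  + have [_ _ /(in_P_pair_bounds P) [_ ?]] := star_seq_outer sf (odd_gt0 s_odd).
    by have := noB1_covered0 no1 (_ : 0 <= (f 1).-1) first_gap; lia.
  + by have := noB1_covered1 no1 last_gap; lia.
Qed.

End NoB1Pr.

Lemma in_Xplus'_I_k_adjacent M B : in_Xplus' M.+2 B -> (exists a b, inB1 B a b) ->
  exists B' j, [/\ B = I_k j B', in_Xplus' M B' &
    (B0_nonempty B /\ 0 < j <= M) \/ (~ B0_nonempty B /\ 0 < j < M)].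
Proof.
move=> X [a [b ab]]; have [j [jB j0 jM nB0_jM]] := in_Xplus'_adjacent X ab.
have [[[P _ _] _ _] _] := X.
have [B' EB] : exists B', B = I_k j B' := ex_intro _ _ (I_k_of_adjacent P jB).
have B0E := B0_nonempty_I_k j B'; rewrite -EB in B0E.
have j0M : 0 < j <= M by lia.
have [B0|nB0] := classic (B0_nonempty B).
- exists B', j; split=> //; last by left; split.
  by apply/(in_Xplus'_I_k j0M (or_introl (B0E.1 B0))); rewrite -EB.
- have jM' : j < M by have := nB0_jM nB0; lia.
  exists B', j; split=> //; last by right; split=> //; lia.
  by apply/(in_Xplus'_I_k j0M (or_intror jM')); rewrite -EB.
Qed.

Lemma in_Xplus'_3 B : in_Xplus' 3 B <-> B = fset0.
Proof.
split=> [X|->]; last exact: in_Xplus'_fset0.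
have [[[P _ _] supp3 _] _] := X.
have no0 i j : ~ inB0 B i j.
  move=> [ji ij_even ijB]; have [iM jM] := in_P_pair_bounds P ijB.
  have i3 : i = 3 by move: ij_even; lia.
  by apply: supp3; exists [fset i; j]; rewrite // i3 !inE eqxx.
have nB0 : ~ B0_nonempty B by case=> i [j /no0].
apply: (in_P_no_pairs P) => // a b ab.
by have [j [_ j0 _ /(_ nB0)]] := in_Xplus'_adjacent X ab; lia.
Qed.

Lemma in_Pr_Xplus' m B : in_Pr m.*2.+3 B -> in_Xplus' m.*2.+3 B.
Proof.
case=> [->|[tau [tau_even tau_m ->]]]; first exact: in_Xplus'_fset0.
apply: in_Xplus'_Pr; last lia.
by move: tau_even; rewrite -(ltn_predK (_ : 0 < tau)) /= ?negbK //; lia.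
Qed.

Lemma in_Xplus'_sharp_aux k B : in_Xplus' k.*2.+3 B <-> sharp_aux k B.
Proof.
elim: k B => [|k IH] B; first exact: in_Xplus'_3.
split=> [X|[_ [/in_Pr_Xplus' //|[B' [j [B'X -> jM]]]]]].
- split; first by have [[[]]] := X.
  have [B1|noB1] := classic (exists a b, inB1 B a b).
    have [B' [j [-> /IH ? jM]]] := in_Xplus'_I_k_adjacent X B1.
    by right; exists B', j.
  by left; apply: in_Xplus'_noB1 => // a b ab; apply: noB1; exists a, b.
- apply/(in_Xplus'_I_k (M := k.*2.+3)); last exact/IH.
    by case: jM => [] [] _; lia.
  by case: jM => [[/(B0_nonempty_I_k j B') ? _]|[_ ?]]; [left | right; lia].
Qed.

Theorem theorem4p3 (N : nat) : odd N -> 3 <= N ->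
  forall B : {fset {fset nat}}, in_Xplus' N B <-> in_sharpXplus N B.
Proof.
move=> N_odd N3 B; rewrite /in_sharpXplus.
by rewrite {1}(_ : N = ((N - 3)./2).*2.+3); [apply: in_Xplus'_sharp_aux | lia].
Qed.
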